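(* Let $n\ge2$ and let $z_1,\dots,z_n$ be indeterminates. For all integers $m,k\ge0$, \[ E(n)_{m+1,m+k+1}=\sum_{i=0}^{m}\binom{m}{i}\frac{(m+k)!}{(i+k)!}\,M(m+1-i,\,k+2i,\,n). \]
   Context: For distinct $i,j\in\{1,\dots,n\}$ and $m\ge0$, $e^{(i,j)}_m$ is the elementary symmetric polynomial of degree $m$ in the variables $\{z_l:l\ne i,j\}$ ($e^{(i,j)}_0=1$, and $0$ if $m>n-2$). $E(n)$ is the infinite matrix with entries $E(n)_{r,s}=(r-1)!(s-1)!\sum_{1\le i<j\le n}e^{(i,j)}_{r-1}e^{(i,j)}_{s-1}(z_i-z_j)^2$ for $r,s\ge1$. For $m_2\ge1$, $m_1\ge0$, with $N=m_1+m_2+1$ and sums over all $N$-tuples $(b_1,\dots,b_N)$ of pairwise distinct elements of $\{1,\dots,n\}$, \[ M(m_2,m_1,n)=\sum_{b} z_{b_1}^2\cdots z_{b_{m_2}}^2\,z_{b_{m_2+1}}\cdots z_{b_{m_2+m_1}}\;-\;\sum_{b} z_{b_1}^2\cdots z_{b_{m_2-1}}^2\,z_{b_{m_2}}z_{b_{m_2+1}}\cdots z_{b_{m_2+m_1+1}}. \] *)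

From HB Require Import structures.
From mathcomp Require Import all_boot all_algebra.
From mathcomp Require Import mpoly.
Set Implicit Arguments. Unset Strict Implicit. Unset Printing Implicit Defensive.
Import GRing.Theory.
Local Open Scope ring_scope.

(* Variables z_1..z_n are 'X_l for l : 'I_n (0-based). *)

(* e^{(i,j)}_m : elementary symmetric polynomial of degree m in {z_l : l <> i, j};
   it is 1 for m = 0 and 0 for m > n-2 automatically. *)
Definition eij (n : nat) (i j : 'I_n) (m : nat) : {mpoly rat[n]} :=
  \sum_(S : {set 'I_n} | (#|S| == m)%N && (i \notin S) && (j \notin S))
     \prod_(l in S) 'X_l.

(* E(n)_{r,s} for r, s >= 1 (1-based indices r, s). *)
Definition Emat (n r s : nat) : {mpoly rat[n]} :=
  ((r.-1)`! * (s.-1)`!)%:R *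
  \sum_(i : 'I_n) \sum_(j : 'I_n | (i < j)%N)
     eij i j r.-1 * eij i j s.-1 * ('X_i - 'X_j) ^+ 2.

(* M(m2, m1, n), N = m1 + m2 + 1, sums over injective b : 'I_N -> 'I_n
   (0-based positions t; position t corresponds to b_{t+1}). *)
Definition Mpoly (m2 m1 n : nat) : {mpoly rat[n]} :=
  let N := (m1 + m2).+1 in
  \sum_(b : {ffun 'I_N -> 'I_n} | injectiveb b)
     \prod_(t < N) 'X_(b t) ^+ (if (t < m2)%N then 2 else if (t < m2 + m1)%N then 1 else 0)
  - \sum_(b : {ffun 'I_N -> 'I_n} | injectiveb b)
     \prod_(t < N) 'X_(b t) ^+ (if (t < m2.-1)%N then 2 else 1).

(* Both sides are expanded in the polynomials [msum21 R p q], the sum of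
   z_A^2 z_B over disjoint A, B in R with |A| = p and |B| = q.

   M: grouping the injections b by the images of the positions of exponent 2
   and of exponent 1, the fibre over (A, B) consists of the injections that
   respect the colouring "in A / in B / elsewhere", and these are counted
   position by position, giving p! q! (n - p - q)^_r.

   E: grouping the pairs (S, T) of the product e_m e_(m+k) by (S :&: T, the
   symmetric difference) gives [msum21 R (m - i) (k + 2i)] with multiplicity
   C(k + 2i, i), where i = |S :\: T|.  Multiplying by z_i^2 (resp. z_i z_j)
   and summing over i <> j adds i to A (resp. i and j to B), with
   multiplicity the number of ways to choose that i (resp. i and j).

   Comparing coefficients leaves C(m, i) (m - i)! i! = m! and
   C(k + 2i, i) i! (k + i)! = (k + 2i)!. *)

From HB Require Import structures.
From mathcomp Require Import all_boot all_algebra.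
From mathcomp Require Import mpoly.
From mathcomp Require Import zify ring.
Set Implicit Arguments. Unset Strict Implicit. Unset Printing Implicit Defensive.
Import GRing.Theory.

Section ColouredInjections.
Variables (T : finType) (V : eqType) (colour : T -> V) (pattern : nat -> V).

Definition coloured_inj N :=
  [set f : {ffun 'I_N -> T} | injectiveb f && [forall t, colour (f t) == pattern t]].

Definition ffun_rcons N (f : {ffun 'I_N -> T}) (x : T) : {ffun 'I_N.+1 -> T} :=
  [ffun t => if unlift ord_max t is Some s then f s else x].

Lemma ffun_rcons_lift N (f : {ffun 'I_N -> T}) x s : ffun_rcons f x (lift ord_max s) = f s.
Proof. by rewrite ffunE liftK. Qed.

Lemma ffun_rcons_max N (f : {ffun 'I_N -> T}) x : ffun_rcons f x ord_max = x.
Proof. by rewrite ffunE unlift_none. Qed.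

Lemma injectiveb_rcons N (f : {ffun 'I_N -> T}) x :
  injectiveb (ffun_rcons f x) = injectiveb f && (x \notin codom f).
Proof.
apply/injectiveP/andP => [inj_fx | [/injectiveP inj_f f'x]].
  split.
    apply/injectiveP => s1 s2 eq_f; apply: (@lift_inj _ ord_max); apply: inj_fx.
    by rewrite !ffun_rcons_lift.
  apply/codomP => -[s eq_x]; have := inj_fx ord_max (lift ord_max s).
  by rewrite ffun_rcons_max ffun_rcons_lift => /(_ eq_x)/eqP; rewrite (negbTE (neq_lift _ _)).
move=> t1 t2; case: (unliftP ord_max t1) => [s1 ->|->];
  case: (unliftP ord_max t2) => [s2 ->|->]; rewrite ?ffun_rcons_lift ?ffun_rcons_max //.
- by move/inj_f ->.
- by move=> eq_x; rewrite -eq_x codom_f in f'x.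
- by move=> eq_x; rewrite eq_x codom_f in f'x.
Qed.

Lemma coloured_inj_rcons N (f : {ffun 'I_N -> T}) x :
  (ffun_rcons f x \in coloured_inj N.+1) =
  [&& f \in coloured_inj N, colour x == pattern N & x \notin codom f].
Proof.
have colour_rcons : [forall t, colour (ffun_rcons f x t) == pattern t] =
    [forall s : 'I_N, colour (f s) == pattern s] && (colour x == pattern N).
  apply/forallP/andP => [col_fx | [/forallP col_f col_x] t].
    split; last by have := col_fx ord_max; rewrite ffun_rcons_max.
    by apply/forallP => s; have := col_fx (lift ord_max s); rewrite ffun_rcons_lift lift_max.
  case: (unliftP ord_max t) => [s ->|->]; first by rewrite ffun_rcons_lift lift_max.
  by rewrite ffun_rcons_max.
rewrite !inE injectiveb_rcons colour_rcons.
by case: (injectiveb f); case: [forall s, _]; case: (colour x == _); case: (x \in _).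
Qed.

Lemma card_coloured_extensions N (f : {ffun 'I_N -> T}) : f \in coloured_inj N ->
  #|[set x | colour x == pattern N & x \notin codom f]| =
  #|[set x | colour x == pattern N]| - #|[set s : 'I_N | pattern s == pattern N]|.
Proof.
rewrite inE => /andP [/injectiveP inj_f /forallP col_f].
set C := [set x | colour x == pattern N].
have -> : #|[set x | colour x == pattern N & x \notin codom f]| = #|C :\: [set x in codom f]|.
  by apply: eq_card => x; rewrite !inE andbC.
rewrite cardsD.
have -> : C :&: [set x in codom f] = f @: [set s : 'I_N | pattern s == pattern N].
  apply/setP => x; rewrite !inE; apply/andP/imsetP => [[/eqP col_x /codomP [s eq_x]] | [s]].
    by exists s => //; rewrite inE -(eqP (col_f s)) -eq_x col_x.
  by rewrite inE => /eqP eq_s ->; rewrite (eqP (col_f s)) eq_s codom_f.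
by rewrite card_imset.
Qed.

Lemma card_coloured_inj N :
  #|coloured_inj N| =
  \prod_(t < N)
     (#|[set x | colour x == pattern t]| - #|[set s : 'I_t | pattern s == pattern t]|).
Proof.
elim: N => [|N IH].
  have -> : coloured_inj 0 = setT.
    apply/setP => f; rewrite !inE.
    by apply/andP; split; [apply/injectiveP => -[] | apply/forallP => -[]].
  by rewrite big_ord0 cardsT card_ffun card_ord expn0.
rewrite big_ord_recr /= -IH -[#|coloured_inj N.+1|]sum1_card.
rewrite (reindex (fun fx : {ffun 'I_N -> T} * T => ffun_rcons fx.1 fx.2)) /=; last first.
  exists (fun f : {ffun 'I_N.+1 -> T} => ([ffun s => f (lift ord_max s)], f ord_max)).
    move=> [f x] _ /=; rewrite ffun_rcons_max; congr pair.
    by apply/ffunP => s; rewrite ffunE ffun_rcons_lift.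
  move=> f _; apply/ffunP => t; rewrite ffunE.
  by case: unliftP => [s ->|->] /=; rewrite ?ffunE.
under eq_bigl do rewrite coloured_inj_rcons.
rewrite -(pair_big_dep (mem (coloured_inj N))
           (fun f x => (colour x == pattern N) && (x \notin codom f)) (fun _ _ => 1%N)) /=.
rewrite -sum_nat_const; apply: eq_bigr => f f_col.
by rewrite sum1dep_card card_coloured_extensions.
Qed.

End ColouredInjections.

Lemma card_ord_range N x y : #|[set s : 'I_N | x <= s < y]| = minn N y - minn N x.
Proof.
rewrite -sum1dep_card; elim: N => [|N IH]; first by rewrite big_ord0 !min0n.
by rewrite big_mkcond big_ord_recr -big_mkcond /= IH; case: ifP; lia.
Qed.

Definition block_exp a b t : nat := if t < a then 2 else if t < a + b then 1 else 0.

Lemma block_exp_eq2 a b t : (block_exp a b t == 2) = (t < a).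
Proof. by rewrite /block_exp; case: ifP => //; case: ifP. Qed.

Lemma block_exp_eq1 a b t : (block_exp a b t == 1) = (a <= t < a + b).
Proof. by rewrite /block_exp; case: ltnP => //; case: ifP. Qed.

Lemma card_block_exp2 a b N : a <= N -> #|[set t : 'I_N | block_exp a b t == 2]| = a.
Proof.
move=> le_aN; transitivity (minn N a - minn N 0); last by lia.
by rewrite -card_ord_range; apply: eq_card => t; rewrite !inE block_exp_eq2.
Qed.

Lemma card_block_exp1 a b N : a + b <= N -> #|[set t : 'I_N | block_exp a b t == 1]| = b.
Proof.
move=> le_abN; transitivity (minn N (a + b) - minn N a); last by lia.
by rewrite -card_ord_range; apply: eq_card => t; rewrite !inE block_exp_eq1.
Qed.

Lemma card_same_block a b t :
  #|[set s : 'I_t | block_exp a b s == block_exp a b t]| =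
  t - (if t < a then 0 else if t < a + b then a else a + b).
Proof.
set lo := if t < a then 0 else _; transitivity (minn t t - minn t lo); last by lia.
rewrite -card_ord_range; apply: eq_card => s; rewrite !inE /lo /block_exp.
have := ltn_ord s; case: (ltnP s a); case: (ltnP s (a + b)); case: (ltnP t a);
  case: (ltnP t (a + b)) => /= *; apply/idP/idP; lia.
Qed.

Lemma prod_block a b r (f : nat -> nat) :
  \prod_(t < a + b + r)
     (f (block_exp a b t) - #|[set s : 'I_t | block_exp a b s == block_exp a b t]|) =
  f 2 ^_ a * f 1 ^_ b * f 0 ^_ r.
Proof.
rewrite !big_split_ord !ffact_prod; congr (_ * _ * _); apply: eq_bigr => i _;
  rewrite card_same_block /= /block_exp; have := ltn_ord i.
- by move=> ->; rewrite subn0.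
- by move=> lt_ib; rewrite ltnNge leq_addr ltn_add2l lt_ib addKn.
- by rewrite !ifN ?addKn //; lia.
Qed.

Lemma cardsU_disjoint (T : finType) (A B : {set T}) :
  [disjoint A & B] -> #|A :|: B| = #|A| + #|B|.
Proof. by move=> dAB; rewrite cardsU (disjoint_setI0 dAB) cards0 subn0. Qed.

Lemma disjoint_setDD (T : finType) (S U : {set T}) : [disjoint S :\: U & U :\: S].
Proof.
by rewrite -setI_eq0; apply/eqP/setP => l; rewrite !inE; case: (l \in S); case: (l \in U).
Qed.

Lemma disjointU1s (T : finType) (i : T) (A B : {set T}) :
  [disjoint i |: A & B] = (i \notin B) && [disjoint A & B].
Proof. by rewrite -!setI_eq0 setIUl setU_eq0 setI_eq0 disjoints1. Qed.

Lemma subset_setC2 (T : finType) (S : {set T}) i j :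
  (S \subset ~: [set i; j]) = (i \notin S) && (j \notin S).
Proof.
apply/subsetP/andP => [sub | [iS jS] l lS]; last first.
  by rewrite !inE negb_or; apply/andP; split; apply: contraTneq lS => ->.
by split; apply/negP => /sub; rewrite !inE eqxx ?orbT.
Qed.

Lemma card_offdiag (T : finType) (B : {set T}) :
  #|setX B B :\: [set ij : T * T | ij.1 == ij.2]| = #|B| * #|B|.-1.
Proof.
rewrite cardsD cardsX.
have -> : setX B B :&: [set ij : T * T | ij.1 == ij.2] = [set (i, i) | i in B].
  apply/setP => -[i j]; rewrite !inE /=; apply/idP/imsetP.
    by case/andP => /andP [_ jB] /eqP ->; exists j.
  by case=> l lB [-> ->]; rewrite lB eqxx.
by rewrite card_imset; [case: #|B| => // c; rewrite mulnS addKn | move=> x y []].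
Qed.

Local Open Scope ring_scope.

Lemma sum_fibres (I J : finType) (V : nmodType) (P : pred I) (Q : pred J) (f : I -> J)
    (G : J -> V) (c : J -> nat) :
  (forall x, P x -> Q (f x)) ->
  (forall y, Q y -> #|[set x | P x & f x == y]| = c y) ->
  \sum_(x | P x) G (f x) = \sum_(y | Q y) G y *+ c y.
Proof.
move=> PQ card_fibre; rewrite (partition_big f Q) //; apply: eq_bigr => y Qy.
rewrite -card_fibre // -sum1dep_card -sumrMnr.
by apply: eq_bigr => x /andP [_ /eqP ->].
Qed.

Lemma sum_ord_neq (V : nmodType) m (K : 'I_m -> 'I_m -> V) :
  \sum_(i < m) \sum_(j < m | i != j) K i j = \sum_(i < m) \sum_(j < m | (i < j)%N) (K i j + K j i).
Proof.
transitivity (\sum_(i < m) \sum_(j < m | (i < j)%N) K i j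
              + \sum_(i < m) \sum_(j < m | (j < i)%N) K i j).
  rewrite -big_split; apply: eq_bigr => i _; rewrite (bigID (fun j : 'I_m => (i < j)%N)) /=.
  by congr (_ + _); apply: eq_bigl => j; rewrite -(inj_eq val_inj) /= neq_ltn; case: ltngtP.
under [RHS]eq_bigr => i _ do rewrite big_split.
by rewrite big_split /=; congr (_ + _); rewrite (exchange_big_dep xpredT).
Qed.

Section MonomialExpansions.
Variable n : nat.
Local Notation P := {mpoly rat[n]}.

Definition mono21 (A B : {set 'I_n}) : P := \prod_(l in A) 'X_l ^+ 2 * \prod_(l in B) 'X_l.

Definition shape21 (R : {set 'I_n}) p q (AB : {set 'I_n} * {set 'I_n}) :=
  [&& [disjoint AB.1 & AB.2], AB.1 \subset R, AB.2 \subset R, #|AB.1| == p & #|AB.2| == q].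

Definition msum21 R p q : P := \sum_(AB | shape21 R p q AB) mono21 AB.1 AB.2.

Arguments shape21 R (p q)%_N AB.
Arguments msum21 R (p q)%_N.

Definition esym_on (R : {set 'I_n}) m : P :=
  \sum_(S : {set 'I_n} | (#|S| == m) && (S \subset R)) \prod_(l in S) 'X_l.

Lemma eij_esym_on (i j : 'I_n) m : eij i j m = esym_on (~: [set i; j]) m.
Proof. by apply: eq_bigl => S; rewrite subset_setC2 andbA. Qed.

Lemma prodX_setE (S : {set 'I_n}) k :
  \prod_(l in S) ('X_l : P) ^+ k = \prod_l 'X_l ^+ (k * (l \in S)).
Proof. by rewrite big_mkcond; apply: eq_bigr => l _; case: (l \in S); rewrite ?muln1 ?muln0. Qed.

Lemma prodX_mul (S T : {set 'I_n}) :
  \prod_(l in S) ('X_l : P) * \prod_(l in T) 'X_l = mono21 (S :&: T) (S :\: T :|: T :\: S).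
Proof.
rewrite /mono21 -[\prod_(l in S) _](eq_bigr _ (fun l _ => expr1 ('X_l : P))).
rewrite -[\prod_(l in T) _](eq_bigr _ (fun l _ => expr1 ('X_l : P))).
rewrite -[\prod_(l in _ :|: _) _](eq_bigr _ (fun l _ => expr1 ('X_l : P))).
rewrite !prodX_setE -!big_split /=; apply: eq_bigr => l _; rewrite -!exprD !inE.
by case: (l \in S); case: (l \in T).
Qed.

Definition esym_pair (R : {set 'I_n}) m k (ST : {set 'I_n} * {set 'I_n}) :=
  ((#|ST.1| == m) && (ST.1 \subset R)) && ((#|ST.2| == m + k)%N && (ST.2 \subset R)).

(* [inord] is exact on [esym_pair R m k], where |S :\: T| <= |S| = m. *)
Definition meet_symdiff m (ST : {set 'I_n} * {set 'I_n}) : 'I_m.+1 * ({set 'I_n} * {set 'I_n}) :=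
  (inord #|ST.1 :\: ST.2|, (ST.1 :&: ST.2, ST.1 :\: ST.2 :|: ST.2 :\: ST.1)).

Lemma meet_symdiff_shape (R : {set 'I_n}) m k ST : esym_pair R m k ST ->
  shape21 R (m - (meet_symdiff m ST).1) (k + 2 * (meet_symdiff m ST).1) (meet_symdiff m ST).2.
Proof.
case: ST => S T /andP [/andP [/eqP cS0 sSR] /andP [/eqP cT0 sTR]].
have cS : #|S| = m := cS0; have cT : #|T| = (m + k)%N := cT0.
have := subset_leq_card (subsetIl S T); rewrite cS => le_ST.
rewrite /= inordK; last by rewrite ltnS -cS subset_leq_card ?subsetDl.
apply/and5P; split => /=.
- by rewrite -setI_eq0; apply/eqP/setP => l; rewrite !inE; case: (l \in S); case: (l \in T).
- by rewrite subIset ?sSR.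
- by rewrite subUset !(subset_trans (subsetDl _ _)).
- by rewrite cardsD cS subKn.
- by rewrite cardsU_disjoint ?disjoint_setDD // !cardsD [T :&: S]setIC; apply/eqP; lia.
Qed.

Lemma meet_symdiff_join (R A B U : {set 'I_n}) m k (i : 'I_m.+1) :
  shape21 R (m - i) (k + 2 * i) (A, B) -> U \subset B -> #|U| = i ->
  esym_pair R m k (A :|: U, A :|: B :\: U) &&
  (meet_symdiff m (A :|: U, A :|: B :\: U) == (i, (A, B))).
Proof.
case/and5P => /= dAB sAR sBR /eqP cA0 /eqP cB0 sUB cU; have le_im : (i <= m)%N by rewrite -ltnS.
have cA : #|A| = (m - i)%N := cA0; have cB : #|B| = (k + 2 * i)%N := cB0.
have mem_AUB l : ((l \in U) ==> (l \in B)) && ~~ ((l \in A) && (l \in B)).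
  apply/andP; split; first exact/implyP/(subsetP sUB).
  by case: (boolP (l \in A)) => // /(disjointFr dAB) ->.
have eq_meet : (A :|: U) :&: (A :|: B :\: U) = A.
  by apply/setP => l; rewrite !inE; case: (l \in A); case: (l \in U).
have eq_diff : (A :|: U) :\: (A :|: B :\: U) = U.
  apply/setP => l; move: (mem_AUB l); rewrite !inE.
  by case: (l \in A); case: (l \in U); case: (l \in B).
have eq_symdiff : (A :|: U) :\: (A :|: B :\: U) :|: (A :|: B :\: U) :\: (A :|: U) = B.
  apply/setP => l; move: (mem_AUB l); rewrite !inE.
  by case: (l \in A); case: (l \in U); case: (l \in B).
have dAU : [disjoint A & U] by rewrite disjoint_sym (disjointWl sUB) // disjoint_sym.
have dABU : [disjoint A & B :\: U].
  by rewrite disjoint_sym (disjointWl (subsetDl B U)) // disjoint_sym.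
have cBU : #|B :\: U| = (k + i)%N by rewrite cardsD (setIidPr sUB) cB cU; lia.
rewrite /meet_symdiff /= eq_meet eq_symdiff eq_diff cU inord_val eqxx andbT.
rewrite /esym_pair /= !cardsU_disjoint // cA cU cBU !subUset sAR.
rewrite (subset_trans sUB sBR) (subset_trans (subsetDl B U) sBR).
by apply/and3P; split; apply/eqP; lia.
Qed.

Lemma card_meet_symdiff_fibre (R A B : {set 'I_n}) m k (i : 'I_m.+1) :
  shape21 R (m - i) (k + 2 * i) (A, B) ->
  #|[set ST | esym_pair R m k ST & meet_symdiff m ST == (i, (A, B))]| = 'C(k + 2 * i, i).
Proof.
move=> shapeAB; case/and5P: (shapeAB) => /= dAB _ _ _ /eqP cB.
have AUK (U : {set 'I_n}) : U \subset B -> (A :|: U) :\: A = U.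
  move=> sUB; rewrite setDUl setDv set0U; apply/setDidPl.
  by rewrite (disjointWl sUB) // disjoint_sym.
rewrite -cB -cards_draws -(@card_in_imset _ _ (fun U => (A :|: U, A :|: B :\: U))); last first.
  move=> U1 U2; rewrite !inE => /andP [sU1B _] /andP [sU2B _] [eq_AU _].
  by rewrite -(AUK _ sU1B) -(AUK _ sU2B) eq_AU.
apply: eq_card => -[S T]; rewrite inE; apply/idP/imsetP => [|[U]]; last first.
  by rewrite inE => /andP [sUB /eqP cU] [-> ->]; apply: meet_symdiff_join.
case/andP => /andP [/andP [/eqP cS _] _] /eqP [eq_i eq_A eq_B].
exists (S :\: T).
  rewrite inE -eq_B subsetUl -eq_i inordK ?eqxx // ltnS -cS.
  exact/subset_leq_card/subsetDl.
rewrite -eq_A -eq_B; congr pair; apply/setP => l; rewrite !inE;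
  by case: (l \in S); case: (l \in T).
Qed.

Lemma esym_on_mul R m k :
  esym_on R m * esym_on R (m + k) =
  \sum_(i < m.+1) msum21 R (m - i) (k + 2 * i) *+ 'C(k + 2 * i, i).
Proof.
rewrite /esym_on mulr_suml; under eq_bigr do rewrite mulr_sumr.
rewrite pair_big_dep /=; under eq_bigr do rewrite prodX_mul.
rewrite (@sum_fibres _ _ _ (esym_pair R m k)
  (fun y : 'I_m.+1 * _ => shape21 R (m - y.1) (k + 2 * y.1) y.2)
  (meet_symdiff m) (fun y => mono21 y.2.1 y.2.2) (fun y => 'C(k + 2 * y.1, y.1))).
- by under [RHS]eq_bigr do rewrite /msum21 -sumrMnl; rewrite pair_big_dep.
- exact: meet_symdiff_shape.
- by move=> [i [A B]] /card_meet_symdiff_fibre.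
Qed.

Definition off_diag_shape p q (x : ('I_n * 'I_n) * ({set 'I_n} * {set 'I_n})) :=
  (x.1.1 != x.1.2) && shape21 (~: [set x.1.1; x.1.2]) p q x.2.

Definition add_sq (x : ('I_n * 'I_n) * ({set 'I_n} * {set 'I_n})) := (x.1.1 |: x.2.1, x.2.2).

Lemma add_sq_shape p q x : off_diag_shape p q x -> shape21 setT p.+1 q (add_sq x).
Proof.
case: x => [[i j] [A B]] /andP [_ /and5P [/= dAB]].
rewrite !subset_setC2 => /andP [iA _] /andP [iB _] /eqP cA /eqP cB.
by rewrite /shape21 /= !subsetT disjointU1s iB dAB cardsU1 iA cA cB !eqxx.
Qed.

Lemma card_add_sq_fibre p q A B :
  shape21 setT p.+1 q (A, B) ->
  #|[set x | off_diag_shape p q x & add_sq x == (A, B)]| = (p.+1 * (n - (p.+1 + q)))%N.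
Proof.
case/and5P => /= dAB _ _ /eqP cA0 /eqP cB0.
have cA : #|A| = p.+1 := cA0; have cB : #|B| = q := cB0.
have cC : #|~: (A :|: B)| = (n - (p.+1 + q))%N.
  by have := cardsC (A :|: B); rewrite card_ord cardsU_disjoint // cA cB; lia.
rewrite -cC -cA -cardsX -(@card_in_imset _ _ (fun ij : 'I_n * 'I_n => (ij, (A :\ ij.1, B))));
  last by move=> x y _ _ [].
apply: eq_card => -[[i j] [A0 B0]]; rewrite !inE /off_diag_shape /shape21 /= !subset_setC2.
apply/idP/imsetP => [|[[i' j']]].
  case/andP => /and5P [ij _ /andP [iA0 jA0] /andP [_ jB0] _] /eqP [eA eB].
  exists (i, j); last by rewrite /= -eA -eB setU1K.
  by rewrite !inE /= -eA -eB !inE eqxx !negb_or [j == i]eq_sym ij jA0 jB0.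
rewrite !inE /= negb_or => /and3P [iA jA jB] [-> -> -> ->].
have ij : i' != j' by apply: contraNneq jA => <-.
have cAi : #|A :\ i'| = p by move: cA; rewrite (cardsD1 i') iA add1n => -[].
rewrite /add_sq /= setD1K // ij (disjointWl (subD1set A i') dAB) !inE eqxx (negbTE jA) andbF.
by rewrite (disjointFr dAB iA) jB cAi cB !eqxx.
Qed.

Definition add_pair (x : ('I_n * 'I_n) * ({set 'I_n} * {set 'I_n})) :=
  (x.2.1, x.1.1 |: (x.1.2 |: x.2.2)).

Lemma add_pair_shape p q x : off_diag_shape p q x -> shape21 setT p q.+2 (add_pair x).
Proof.
case: x => [[i j] [A B]] /andP [/= ij /and5P [/= dAB]].
rewrite !subset_setC2 => /andP [iA jA] /andP [iB jB] /eqP cA /eqP cB.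
rewrite /shape21 /= !subsetT disjoint_sym !disjointU1s iA jA disjoint_sym dAB.
by rewrite !cardsU1 !inE negb_or ij iB jB cA cB !eqxx.
Qed.

Lemma card_add_pair_fibre p q A B :
  shape21 setT p q.+2 (A, B) ->
  #|[set x | off_diag_shape p q x & add_pair x == (A, B)]| = (q.+2 * q.+1)%N.
Proof.
case/and5P => /= dAB _ _ /eqP cA0 /eqP cB0.
have cA : #|A| = p := cA0; have cB : #|B| = q.+2 := cB0.
rewrite -[(q.+2 * q.+1)%N]/(q.+2 * q.+2.-1)%N -cB -card_offdiag.
rewrite -(@card_in_imset _ _ (fun ij : 'I_n * 'I_n => (ij, (A, B :\ ij.1 :\ ij.2))));
  last by move=> x y _ _ [].
apply: eq_card => -[[i j] [A0 B0]]; rewrite !inE /off_diag_shape /shape21 /= !subset_setC2.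
apply/idP/imsetP => [|[[i' j']]].
  case/andP => /and5P [ij _ /andP [iA0 jA0] /andP [iB0 jB0] _] /eqP [eA eB].
  exists (i, j); first by rewrite !inE /= -eB !inE !eqxx /= orbT ij.
  by rewrite /= -eA -eB setU1K ?setU1K // !inE negb_or ij.
rewrite !inE /= => /and3P [ij iB jB] [-> -> -> ->].
have sB2B : B :\ i' :\ j' \subset B := subset_trans (subD1set _ _) (subD1set _ _).
have cB2 : #|B :\ i' :\ j'| = q.
  by move: cB; rewrite (cardsD1 i') iB (cardsD1 j' (B :\ i')) !inE eq_sym ij jB => -[].
rewrite ij (disjointWr sB2B dAB) (disjointFl dAB iB) (disjointFl dAB jB) !inE !eqxx andbF.
by rewrite cA cB2 !eqxx /add_pair /= setD1K ?setD1K // !inE eq_sym ij jB.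
Qed.

Lemma sum_sqX_msum21 p q :
  \sum_(i : 'I_n) \sum_(j : 'I_n | i != j) 'X_i ^+ 2 * msum21 (~: [set i; j]) p q =
  msum21 setT p.+1 q *+ (p.+1 * (n - (p.+1 + q))).
Proof.
under eq_bigr => i _ do under eq_bigr => j _ do rewrite /msum21 mulr_sumr.
rewrite pair_big_dep pair_big_dep /=.
rewrite (eq_bigr (fun x => mono21 (add_sq x).1 (add_sq x).2)); last first.
  move=> [[i j] [A B]] /andP [_ /and5P [_]]; rewrite subset_setC2 => /andP [iA _] _ _ _.
  by rewrite /mono21 big_setU1 //= mulrA.
rewrite (@sum_fibres _ _ _ (off_diag_shape p q) (shape21 setT p.+1 q) add_sq
  (fun y => mono21 y.1 y.2) (fun=> (p.+1 * (n - (p.+1 + q)))%N)).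
- by rewrite sumrMnl.
- exact: add_sq_shape.
- by move=> [A B] /card_add_sq_fibre.
Qed.

Lemma sum_mulX_msum21 p q :
  \sum_(i : 'I_n) \sum_(j : 'I_n | i != j) ('X_i * 'X_j) * msum21 (~: [set i; j]) p q =
  msum21 setT p q.+2 *+ (q.+2 * q.+1).
Proof.
under eq_bigr => i _ do under eq_bigr => j _ do rewrite /msum21 mulr_sumr.
rewrite pair_big_dep pair_big_dep /=.
rewrite (eq_bigr (fun x => mono21 (add_pair x).1 (add_pair x).2)); last first.
  move=> [[i j] [A B]] /andP [/= ij /and5P [_ _]]; rewrite subset_setC2 => /andP [iB jB] _ _.
  rewrite /mono21 /= big_setU1 ?big_setU1 //=; last by rewrite !inE negb_or ij.
  by ring.
rewrite (@sum_fibres _ _ _ (off_diag_shape p q) (shape21 setT p q.+2) add_pair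
  (fun y => mono21 y.1 y.2) (fun=> (q.+2 * q.+1)%N)).
- by rewrite sumrMnl.
- exact: add_pair_shape.
- by move=> [A B] /card_add_pair_fibre.
Qed.

Definition colour21 (A B : {set 'I_n}) (l : 'I_n) : nat :=
  if l \in A then 2 else if l \in B then 1 else 0.

Definition block_images a b N (f : {ffun 'I_N -> 'I_n}) :=
  (f @: [set t : 'I_N | block_exp a b t == 2], f @: [set t : 'I_N | block_exp a b t == 1]).

Lemma prodX_block_images a b N (f : {ffun 'I_N -> 'I_n}) : injective f ->
  \prod_(t < N) 'X_(f t) ^+ block_exp a b t = mono21 (block_images a b f).1 (block_images a b f).2.
Proof.
move=> inj_f; rewrite /mono21 /= !big_imset /=; try by move=> ? ? _ _ /inj_f.
rewrite [X in _ = X * _]big_mkcond [X in _ = _ * X]big_mkcond -big_split /=.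
apply: eq_bigr => t _; rewrite !inE /block_exp.
by case: (t < a)%N; case: (t < a + b)%N; rewrite /= ?mulr1 ?mul1r ?expr1 ?expr0.
Qed.

Lemma block_images_shape a b N (f : {ffun 'I_N -> 'I_n}) :
  (a + b <= N)%N -> injective f -> shape21 setT a b (block_images a b f).
Proof.
move=> le_abN inj_f; rewrite /shape21 /= !subsetT !card_imset //.
rewrite card_block_exp2 ?card_block_exp1 //;
  last by apply: leq_trans le_abN; apply: leq_addr.
rewrite !eqxx !andbT -setI_eq0 -imsetI; last by move=> ? ? _ _ /inj_f.
rewrite imset_eq0 -subset0; apply/subsetP => t; rewrite !inE => /andP [/eqP -> //].
Qed.

Lemma block_images_fibre a b N A B :
  (a + b <= N)%N -> shape21 setT a b (A, B) ->
  [set f : {ffun 'I_N -> 'I_n} | injectiveb f & block_images a b f == (A, B)] =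
  coloured_inj (colour21 A B) (block_exp a b) N.
Proof.
move=> le_abN /and5P [/= dAB _ _ /eqP cA0 /eqP cB0].
have cA : #|A| = a := cA0; have cB : #|B| = b := cB0.
have le_aN : (a <= N)%N by apply: leq_trans le_abN; apply: leq_addr.
apply/setP => f; rewrite !inE; apply: andb_id2l => /injectiveP inj_f.
apply/eqP/forallP => [[<- <-] t | col_f].
  rewrite /colour21 !mem_imset // !inE.
  by rewrite /block_exp; case: (t < a)%N; case: (t < a + b)%N.
have col2 (t : 'I_N) : (block_exp a b t == 2)%N -> f t \in A.
  by move/eqP => blk2; move: (col_f t); rewrite blk2 /colour21; case: ifP => //; case: ifP.
have col1 (t : 'I_N) : (block_exp a b t == 1)%N -> f t \in B.
  by move/eqP => blk1; move: (col_f t); rewrite blk1 /colour21; case: ifP => //; case: ifP.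
rewrite /block_images; congr pair; apply/eqP; rewrite eqEcard card_imset //.
  rewrite card_block_exp2 // cA leqnn andbT.
  by apply/subsetP => x /imsetP [t]; rewrite inE => /col2 ftA ->.
rewrite card_block_exp1 // cB leqnn andbT.
by apply/subsetP => x /imsetP [t]; rewrite inE => /col1 ftB ->.
Qed.

Lemma card_block_images_fibre a b r A B :
  shape21 setT a b (A, B) ->
  #|[set f : {ffun 'I_(a + b + r) -> 'I_n} | injectiveb f & block_images a b f == (A, B)]| =
  (a`! * b`! * (n - (a + b)) ^_ r)%N.
Proof.
move=> shapeAB; rewrite block_images_fibre ?leq_addr // card_coloured_inj.
rewrite (prod_block a b r (fun v => #|[set x | colour21 A B x == v]|)).
case/and5P: shapeAB => /= dAB _ _ /eqP cA0 /eqP cB0.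
have cA : #|A| = a := cA0; have cB : #|B| = b := cB0.
have -> : [set x | colour21 A B x == 2%N] = A.
  by apply/setP => x; rewrite !inE /colour21; case: (x \in A); case: (x \in B).
have -> : [set x | colour21 A B x == 1%N] = B.
  apply/setP => x; rewrite !inE /colour21.
  by case: (boolP (x \in A)) => [/(disjointFr dAB) -> | _]; case: (x \in B).
have -> : [set x | colour21 A B x == 0%N] = ~: (A :|: B).
  by apply/setP => x; rewrite !inE /colour21; case: (x \in A); case: (x \in B).
rewrite cA cB !ffactnn; congr (_ * _ ^_ _)%N.
by rewrite cardsCs setCK card_ord cardsU_disjoint // cA cB.
Qed.

Lemma sum_inj_block a b r N : N = (a + b + r)%N ->
  \sum_(f : {ffun 'I_N -> 'I_n} | injectiveb f) \prod_(t < N) 'X_(f t) ^+ block_exp a b t =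
  msum21 setT a b *+ (a`! * b`! * (n - (a + b)) ^_ r).
Proof.
move=> eqN; subst N.
rewrite (eq_bigr (fun f => mono21 (block_images a b f).1 (block_images a b f).2)); last first.
  by move=> f /injectiveP; apply: prodX_block_images.
rewrite (@sum_fibres _ _ _ _ (shape21 setT a b) (@block_images a b _) (fun y => mono21 y.1 y.2)
  (fun=> (a`! * b`! * (n - (a + b)) ^_ r)%N)); first by rewrite sumrMnl.
- by move=> f /injectiveP; apply: block_images_shape; rewrite leq_addr.
- by move=> [A B] /card_block_images_fibre.
Qed.

Lemma Mpoly_msum21 m2 m1 :
  Mpoly m2.+1 m1 n =
  msum21 setT m2.+1 m1 *+ (m2.+1`! * m1`! * (n - (m2.+1 + m1)))
  - msum21 setT m2 m1.+2 *+ (m2`! * m1.+2`!).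
Proof.
rewrite /Mpoly; congr (_ - _).
  by rewrite (@sum_inj_block m2.+1 m1 1) ?ffactn1 //; lia.
have exp_block (t : 'I_(m1 + m2.+1).+1) :
  (if (t < m2.+1.-1)%N then 2 else 1)%N = block_exp m2 m1.+2 t.
  by rewrite /block_exp; case: ifP => // _; rewrite ifT //; have := ltn_ord t; lia.
under eq_bigr do under eq_bigr do rewrite exp_block.
by rewrite (@sum_inj_block m2 m1.+2 0) ?ffactn0 ?muln1 //; lia.
Qed.

Lemma eij_sym (i j : 'I_n) m : eij i j m = eij j i m.
Proof. by apply: eq_bigl => S; rewrite -!andbA [(i \notin S) && _]andbC. Qed.

Lemma Emat_sum_neq m k : Emat n m.+1 (m + k).+1 =
  (m`! * (m + k)`!)%:R *
  (\sum_i \sum_(j | i != j) 'X_i ^+ 2 * (eij i j m * eij i j (m + k))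
   - \sum_i \sum_(j | i != j) ('X_i * 'X_j) * (eij i j m * eij i j (m + k))).
Proof.
rewrite /Emat /= !sum_ord_neq -sumrB; congr (_ * _); apply: eq_bigr => i _.
rewrite -sumrB; apply: eq_bigr => j _; rewrite [eij j i m]eij_sym [eij j i (m + k)]eij_sym.
ring.
Qed.

Lemma sum_neq_eij_mul (w : 'I_n -> 'I_n -> P) m k :
  \sum_i \sum_(j | i != j) w i j * (eij i j m * eij i j (m + k)) =
  \sum_(l < m.+1)
     (\sum_i \sum_(j | i != j) w i j * msum21 (~: [set i; j]) (m - l) (k + 2 * l))
       *+ 'C(k + 2 * l, l).
Proof.
under eq_bigr => i _ do under eq_bigr => j _ do rewrite !eij_esym_on esym_on_mul mulr_sumr.
under eq_bigr => i _ do rewrite exchange_big; rewrite exchange_big.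
apply: eq_bigr => l _; under eq_bigr => i _ do under eq_bigr => j _ do rewrite mulrnAr.
by under eq_bigr => i _ do rewrite sumrMnl; rewrite sumrMnl.
Qed.

Lemma Emat_msum21 m k : Emat n m.+1 (m + k).+1 =
  \sum_(l < m.+1) (m`! * (m + k)`! * 'C(k + 2 * l, l))%:R *
    (msum21 setT (m - l).+1 (k + 2 * l) *+ ((m - l).+1 * (n - ((m - l).+1 + (k + 2 * l))))
     - msum21 setT (m - l) (k + 2 * l).+2 *+ ((k + 2 * l).+2 * (k + 2 * l).+1)).
Proof.
rewrite Emat_sum_neq !sum_neq_eij_mul -sumrB mulr_sumr; apply: eq_bigr => l _.
rewrite sum_sqX_msum21 sum_mulX_msum21 -mulrnBl !mulr_natl -!mulrnA.
by congr (_ *+ _); ring.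
Qed.

End MonomialExpansions.

Lemma binomial_weight (F : numFieldType) m k i : (i <= m)%N ->
  ('C(m, i)%:R * ((m + k)`!%:R / (i + k)`!%:R) : F) * ((m - i)`! * (k + 2 * i)`!)%:R =
  (m`! * (m + k)`! * 'C(k + 2 * i, i))%:R.
Proof.
move=> le_im; have fact_ki : (k + i)`!%:R != 0 :> F.
  by rewrite Num.Theory.pnatr_eq0 -lt0n fact_gt0.
have bin_fact_ki : ('C(k + 2 * i, i) * (i`! * (k + i)`!))%N = (k + 2 * i)`!.
  have -> : (k + i = k + 2 * i - i)%N by lia.
  by rewrite bin_fact //; lia.
rewrite -(bin_fact le_im) -bin_fact_ki [(i + k)%N]addnC !natrM.
by field.
Qed.

Theorem lemma3p9 (n : nat) (hn : (2 <= n)%N) (m k : nat) :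
  Emat n m.+1 (m + k).+1 =
  \sum_(i < m.+1)
     (('C(m, i))%:R * (((m + k)`!)%:R / ((i + k)`!)%:R) : rat)
       *: Mpoly (m.+1 - i) (k + 2 * i) n.
Proof.
(* The identity holds for every [n]. *)
rewrite Emat_msum21; apply: eq_bigr => i _; have le_im : (i <= m)%N by rewrite -ltnS.
rewrite subSn // Mpoly_msum21.
set base := ((m - i)`! * (k + 2 * i)`!)%N.
have -> : ((m - i).+1`! * (k + 2 * i)`! * (n - ((m - i).+1 + (k + 2 * i))))%N =
          ((m - i).+1 * (n - ((m - i).+1 + (k + 2 * i))) * base)%N by rewrite /base factS; ring.
have -> : ((m - i)`! * (k + 2 * i).+2`!)%N = ((k + 2 * i).+2 * (k + 2 * i).+1 * base)%N.
  by rewrite /base !factS; ring.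
rewrite !(mulrnA _ _ base) -mulrnBl -[in RHS]scaler_nat scalerA binomial_weight //.
by rewrite scaler_nat mulr_natl.
Qed.
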